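(* Let $\omega$ be a primitive cube root of unity and assume $\alpha_1=\alpha_3=\alpha_4$. Let $(y(t),z(t))$ be the unique solution of the system (H), holomorphic near $t=-\omega^2$, with $y(-\omega^2)=-\omega^2$ and $z(-\omega^2)=\frac{2\omega+1}{3}\alpha_2$. Then $$y(t)=-\omega^2+(1-\alpha_0)(t+\omega^2)+\tfrac{1+2\omega}{3}\alpha_0(1-\alpha_0)(t+\omega^2)^2+O((t+\omega^2)^3),\quad z(t)=\tfrac{2\omega+1}{3}\alpha_2-\tfrac{\alpha_2}{3}(1-\alpha_0)(t+\omega^2)+O((t+\omega^2)^2),$$ and this solution is invariant under $\sigma_2\circ\sigma_1$: $$y\Big(\frac1{1-t}\Big)=\frac{1}{1-y(t)},\qquad z\Big(\frac1{1-t}\Big)=-(1-y(t))\big\{-z(t)(1-y(t))+\alpha_2\big\}.$$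
   Context: Fix complex parameters $\alpha_0,\dots,\alpha_4$ with $\alpha_0+\alpha_1+2\alpha_2+\alpha_3+\alpha_4=1$. The system (H) is $$t(t-1)\frac{dy}{dt}=2y(y-1)(y-t)z-(\alpha_0-1)y(y-1)-\alpha_3y(y-t)-\alpha_4(y-1)(y-t),$$ $$t(t-1)\frac{dz}{dt}=-\big(y(y-1)+(y-1)(y-t)+y(y-t)\big)z^2+\big((2y-1)(\alpha_0-1)+(2y-t)\alpha_3+(2y-t-1)\alpha_4\big)z-(\alpha_1+\alpha_2)\alpha_2.$$ The transformation $\sigma_2\circ\sigma_1$ is $t\mapsto\frac1{1-t}$, $y\mapsto\frac1{1-y}$, $z\mapsto-(1-y)(-z(1-y)+\alpha_2)$, with parameters $(\alpha_1,\alpha_3,\alpha_4)$ permuted cyclically; when $\alpha_1=\alpha_3=\alpha_4$ it maps solutions of (H) to solutions of (H). *)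

From Stdlib Require Import Reals.
From Coquelicot Require Import Coquelicot.

Open Scope C_scope.

Definition Cderiv (f : C -> C) (z l : C) : Prop :=
  @is_derive C_AbsRing C_NormedModule f z l.

(* Right-hand sides of the system (H), multiplied out by t(t-1). *)
Definition H_rhs_y (a0 a2 a3 a4 t y z : C) : C :=
  2 * y * (y - 1) * (y - t) * z - (a0 - 1) * y * (y - 1)
  - a3 * y * (y - t) - a4 * (y - 1) * (y - t).

Definition H_rhs_z (a0 a1 a2 a3 a4 t y z : C) : C :=
  - (y * (y - 1) + (y - 1) * (y - t) + y * (y - t)) * z * z
  + ((2 * y - 1) * (a0 - 1) + (2 * y - t) * a3 + (2 * y - t - 1) * a4) * z
  - (a1 + a2) * a2.

Definition solves_H_on (a0 a1 a2 a3 a4 : C) (y z : C -> C) (t0 : C) (r : R) : Prop :=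
  forall t : C, (Cmod (t - t0) < r)%R ->
    exists dy dz : C,
      Cderiv y t dy /\ Cderiv z t dz /\
      t * (t - 1) * dy = H_rhs_y a0 a2 a3 a4 t (y t) (z t) /\
      t * (t - 1) * dz = H_rhs_z a0 a1 a2 a3 a4 t (y t) (z t).

From Stdlib Require Import Reals Lra Lia.
From Coquelicot Require Import Coquelicot.
Open Scope C_scope.

(* Away from t = 0, 1 the system (H) reads y' = F(t, y, z), z' = G(t, y, z) with F and G
   polynomial in (y, z), hence locally Lipschitz.  A mean value inequality for holomorphic
   functions then gives local uniqueness (the difference of two solutions is bounded by
   (2 M |t - t0|)^n for every n) and controls the error of an explicit polynomial
   approximation: each integration of the linearized equation for the error gains one order.
   For the invariance, w^2 + w + 1 = 0 makes t0 = -w^2 the fixed point of t |-> 1 / (1 - t);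
   the prescribed initial values are fixed by sigma_2 o sigma_1, which maps solutions to
   solutions when a1 = a3 = a4, so uniqueness identifies the solution with its image. *)

Lemma Cmod_sub_ge (a b : C) : (Cmod a - Cmod (b - a) <= Cmod b)%R.
Proof.
  pose proof (Cmod_triangle b (- (b - a))) as H.
  rewrite Cmod_opp in H. replace (b + - (b - a)) with a in H by ring. lra.
Qed.

Lemma Cmod_half_neq_0 (a b : C) : a <> 0 -> (Cmod a / 2 <= Cmod b)%R -> b <> 0.
Proof.
  intros Ha Hb ->. rewrite Cmod_0 in Hb. apply Cmod_gt_0 in Ha. lra.
Qed.

Lemma Csub_eq_0 (u v : C) : u - v = 0 -> u = v.
Proof. intros H. replace u with (u - v + v) by ring. rewrite H. ring. Qed.

Lemma Copp_1_neq_0 : (- (1) : C) <> 0.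
Proof. intros E. apply (f_equal fst) in E. simpl in E. lra. Qed.

Lemma Cminus_1_minus_neq_0 (t : C) : t - 1 - t <> 0.
Proof. replace (t - 1 - t) with (- (1) : C) by ring. exact Copp_1_neq_0. Qed.

Lemma regular_factors (t : C) : t * (t - 1) <> 0 -> t <> 0 /\ t - 1 <> 0.
Proof. intros H. split; intros E; apply H; rewrite E; ring. Qed.

Lemma Cmod_lin_comb_le (u v A B : C) (M : R) : (Cmod A <= M)%R -> (Cmod B <= M)%R ->
  (Cmod (u * A + v * B) <= M * (Cmod u + Cmod v))%R.
Proof.
  intros HA HB. eapply Rle_trans; [apply Cmod_triangle |]. rewrite !Cmod_mult.
  pose proof (Cmod_ge_0 u). pose proof (Cmod_ge_0 v).
  apply (Rle_trans _ (Cmod u * M + Cmod v * M)); [| lra].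
  apply Rplus_le_compat; apply Rmult_le_compat_l; assumption.
Qed.

Lemma le_geometric_eq_0 (x q : R) :
  (0 <= x)%R -> (0 <= q < 1)%R -> (forall n, x <= q ^ n)%R -> x = 0%R.
Proof.
  intros Hx Hq H. destruct (Rle_lt_or_eq_dec 0 x Hx) as [Hp | <-]; [exfalso | reflexivity].
  assert (Hq1 : (Rabs q < 1)%R) by (rewrite Rabs_pos_eq; lra).
  destruct (pow_lt_1_zero q Hq1 x Hp) as [N HN]. specialize (HN N (le_n N)).
  rewrite Rabs_pos_eq in HN by (apply pow_le; lra). specialize (H N). lra.
Qed.

(** * Complex derivatives *)

(* [Cderiv] has codomain [C_NormedModule], whereas Coquelicot's product and chain rules
   need the ring [C] itself as codomain; the two notions differ only in [is_linear]. *)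
Lemma Cderiv_is_derive (f : C -> C) (x l : C) :
  Cderiv f x l <-> @is_derive C_AbsRing (AbsRing_NormedModule C_AbsRing) f x l.
Proof. split; intros [_ H]; (split; [apply is_linear_scal_l | exact H]). Qed.

Lemma Cderiv_iff (f : C -> C) (x l : C) :
  Cderiv f x l <->
  (forall eps : R, (0 < eps)%R -> exists delta : R, (0 < delta)%R /\
     forall t, (Cmod (t - x) < delta)%R ->
       (Cmod (f t - f x - l * (t - x)) <= eps * Cmod (t - x))%R).
Proof.
  assert (Elin : forall t, f t - f x - l * (t - x)
                         = minus (minus (f t) (f x)) (scal (minus t x) l)).
  { intros t. change (f t - f x - l * (t - x) = f t - f x - (t - x) * l). ring. }
  split.
  - intros [_ H] eps Heps.
    destruct (H x (fun P HP => HP) (mkposreal eps Heps)) as [delta Hdelta].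
    exists delta. split; [apply cond_pos |]. intros t Ht. rewrite Elin. exact (Hdelta t Ht).
  - intros H. split; [apply is_linear_scal_l |].
    intros x' Hx'. apply (@is_filter_lim_locally_unique C_AbsRing (AbsRing_NormedModule C_AbsRing)) in Hx'.
    subst x'. intros eps. destruct (H eps (cond_pos eps)) as [delta [Hdelta Hd]].
    exists (mkposreal _ Hdelta). intros t Ht. rewrite <- Elin. exact (Hd t Ht).
Qed.

Lemma Cderiv_eq_deriv (f : C -> C) (x l l' : C) : Cderiv f x l -> l = l' -> Cderiv f x l'.
Proof. now intros H <-. Qed.

Lemma Cderiv_const (c x : C) : Cderiv (fun _ => c) x 0.
Proof. exact (is_derive_const c x). Qed.

Lemma Cderiv_id (x : C) : Cderiv (fun t => t) x 1.
Proof. apply Cderiv_is_derive. exact (@is_derive_id C_AbsRing x). Qed.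

Lemma Cderiv_plus (f g : C -> C) (x df dg : C) :
  Cderiv f x df -> Cderiv g x dg -> Cderiv (fun t => f t + g t) x (df + dg).
Proof. exact (is_derive_plus f g x df dg). Qed.

Lemma Cderiv_opp (f : C -> C) (x df : C) : Cderiv f x df -> Cderiv (fun t => - f t) x (- df).
Proof. exact (is_derive_opp f x df). Qed.

Lemma Cderiv_minus (f g : C -> C) (x df dg : C) :
  Cderiv f x df -> Cderiv g x dg -> Cderiv (fun t => f t - g t) x (df - dg).
Proof. exact (is_derive_minus f g x df dg). Qed.

Lemma Cderiv_mult (f g : C -> C) (x df dg : C) :
  Cderiv f x df -> Cderiv g x dg -> Cderiv (fun t => f t * g t) x (df * g x + f x * dg).
Proof.
  rewrite !Cderiv_is_derive. intros Hf Hg. exact (is_derive_mult f g x df dg Hf Hg Cmult_comm).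
Qed.

Lemma Cderiv_comp (f g : C -> C) (x df dg : C) :
  Cderiv f (g x) df -> Cderiv g x dg -> Cderiv (fun t => f (g t)) x (dg * df).
Proof. intros Hf Hg. apply Cderiv_is_derive in Hg. exact (is_derive_comp f g x df dg Hf Hg). Qed.

Definition near (t0 : C) (P : C -> Prop) : Prop :=
  exists d : R, (0 < d)%R /\ forall t, (Cmod (t - t0) < d)%R -> P t.

Lemma near_disk (t0 : C) (r : R) : (0 < r)%R -> near t0 (fun t => (Cmod (t - t0) < r)%R).
Proof. intros Hr. exists r. auto. Qed.

Lemma near_center (t0 : C) (P : C -> Prop) : near t0 P -> P t0.
Proof.
  intros [d [Hd H]]. apply H. assert (E : t0 - t0 = 0) by ring. now rewrite E, Cmod_0.
Qed.

Lemma near_mono (t0 : C) (P Q : C -> Prop) :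
  (forall t, P t -> Q t) -> near t0 P -> near t0 Q.
Proof. intros PQ [d [Hd H]]. exists d. auto. Qed.

Lemma near_and (t0 : C) (P Q : C -> Prop) :
  near t0 P -> near t0 Q -> near t0 (fun t => P t /\ Q t).
Proof.
  intros [d1 [Hd1 H1]] [d2 [Hd2 H2]]. exists (Rmin d1 d2). split; [now apply Rmin_glb_lt |].
  intros t Ht. split.
  - apply H1. eapply Rlt_le_trans; [exact Ht | apply Rmin_l].
  - apply H2. eapply Rlt_le_trans; [exact Ht | apply Rmin_r].
Qed.

Lemma Cderiv_lipschitz (f : C -> C) (x l : C) : Cderiv f x l ->
  near x (fun t => (Cmod (f t - f x) <= (Cmod l + 1) * Cmod (t - x))%R).
Proof.
  intros H. destruct (proj1 (Cderiv_iff f x l) H 1%R Rlt_0_1) as [d [Hd Hf]].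
  exists d. split; [exact Hd |]. intros t Ht. specialize (Hf t Ht).
  replace (f t - f x) with ((f t - f x - l * (t - x)) + l * (t - x)) by ring.
  eapply Rle_trans; [apply Cmod_triangle |]. rewrite Cmod_mult. lra.
Qed.

Lemma Cderiv_continuous (f : C -> C) (x l : C) (P : C -> Prop) :
  Cderiv f x l -> near (f x) P -> near x (fun t => P (f t)).
Proof.
  intros Hf [e [He HP]]. pose proof (Cmod_ge_0 l) as Hl.
  assert (Hr : (0 < e / (Cmod l + 1))%R) by (apply Rdiv_lt_0_compat; lra).
  generalize (near_and _ _ _ (Cderiv_lipschitz f x l Hf) (near_disk x _ Hr)).
  apply near_mono. intros t [Hlip Ht]. apply HP. eapply Rle_lt_trans; [exact Hlip |].
  apply (Rmult_lt_compat_l (Cmod l + 1)) in Ht; [| lra].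
  replace ((Cmod l + 1) * (e / (Cmod l + 1)))%R with e in Ht by (field; lra). exact Ht.
Qed.

Lemma Cderiv_near_nonzero (f : C -> C) (x l : C) : Cderiv f x l -> f x <> 0 ->
  near x (fun t => (Cmod (f x) / 2 <= Cmod (f t))%R).
Proof.
  intros Hf Hx. assert (Ha : (0 < Cmod (f x))%R) by now apply Cmod_gt_0.
  apply (Cderiv_continuous f x l (fun u => Cmod (f x) / 2 <= Cmod u)%R Hf).
  assert (Ha2 : (0 < Cmod (f x) / 2)%R) by lra.
  generalize (near_disk (f x) _ Ha2). apply near_mono. intros u Hu.
  pose proof (Cmod_sub_ge (f x) u). lra.
Qed.

Lemma Cderiv_Cinv (a : C) : a <> 0 -> Cderiv Cinv a (- / (a * a)).
Proof.
  intros Ha. apply Cderiv_iff. intros eps Heps.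
  assert (Hm : (0 < Cmod a)%R) by now apply Cmod_gt_0.
  set (m := Cmod a) in *.
  exists (Rmin (m / 2) (eps * (m * m * m) / 2)). split.
  { apply Rmin_glb_lt; [lra |]. apply Rdiv_lt_0_compat; [| lra].
    repeat apply Rmult_lt_0_compat; lra. }
  intros t Ht.
  assert (Ht1 : (Cmod (t - a) < m / 2)%R) by (eapply Rlt_le_trans; [exact Ht | apply Rmin_l]).
  assert (Ht2 : (Cmod (t - a) < eps * (m * m * m) / 2)%R)
    by (eapply Rlt_le_trans; [exact Ht | apply Rmin_r]).
  assert (Hmt : (m / 2 <= Cmod t)%R) by (pose proof (Cmod_sub_ge a t); unfold m in *; lra).
  assert (Ht0 : t <> 0) by exact (Cmod_half_neq_0 a t Ha Hmt).
  replace (/ t - / a - - / (a * a) * (t - a)) with ((t - a) * (t - a) / (a * a * t))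
    by (field; auto).
  rewrite Cmod_div, !Cmod_mult by (repeat apply Cmult_neq_0; auto). fold m.
  set (h := Cmod (t - a)) in *. pose proof (Cmod_ge_0 (t - a)) as Hh. fold h in Hh.
  apply (Rmult_le_reg_r (m * m * Cmod t)); [repeat apply Rmult_lt_0_compat; lra |].
  unfold Rdiv. rewrite Rmult_assoc, Rinv_l, Rmult_1_r by (apply Rgt_not_eq; repeat apply Rmult_lt_0_compat; lra).
  assert (h * h <= eps * (m * m * m) / 2 * h)%R by (apply Rmult_le_compat_r; lra).
  assert (eps * (m * m * m) / 2 <= eps * (m * m * Cmod t))%R.
  { assert (m * m * (m / 2) <= m * m * Cmod t)%R by (apply Rmult_le_compat_l; nra). nra. }
  nra.
Qed.

Lemma Cderiv_inv (f : C -> C) (x l : C) : Cderiv f x l -> f x <> 0 ->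
  Cderiv (fun t => / f t) x (- l / (f x * f x)).
Proof.
  intros Hf Hx. eapply Cderiv_eq_deriv; [exact (Cderiv_comp Cinv f x _ l (Cderiv_Cinv _ Hx) Hf) |].
  field. exact Hx.
Qed.

(* Keeps the unifier from unfolding [Cderiv] inside [Cderiv_auto], which can diverge. *)
Opaque Cderiv.

Ltac Cderiv_auto := repeat first
  [ apply Cderiv_id | apply Cderiv_const | eapply Cderiv_mult | eapply Cderiv_plus
  | eapply Cderiv_minus | eapply Cderiv_opp | eassumption ].

(** * A mean value inequality *)

Lemma derivable_pt_lim_Re_line (g : C -> C) (t0 h c l : C) (s : R) :
  Cderiv g (t0 + RtoC s * h) l ->
  derivable_pt_lim (fun s => Re (c * g (t0 + RtoC s * h))) s (Re (c * l * h)).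
Proof.
  intros H eps He.
  pose proof (Cmod_ge_0 c) as Hc. pose proof (Cmod_ge_0 h) as Hh.
  set (M := (Cmod c * Cmod h + 1)%R).
  assert (HM : (0 < M)%R) by (unfold M; nra).
  destruct (proj1 (Cderiv_iff g _ l) H (eps / (2 * M))%R) as [d [Hd Hg]].
  { apply Rdiv_lt_0_compat; lra. }
  assert (Hd' : (0 < d / (Cmod h + 1))%R) by (apply Rdiv_lt_0_compat; lra).
  exists (mkposreal _ Hd'). intros k Hk0 Hk. simpl in Hk.
  set (tau := t0 + RtoC s * h).
  set (u := t0 + RtoC (s + k) * h).
  assert (Eu : u - tau = RtoC k * h) by (unfold u, tau; rewrite RtoC_plus; ring).
  assert (Hu : Cmod (u - tau) = (Rabs k * Cmod h)%R) by now rewrite Eu, Cmod_mult, Cmod_R.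
  assert (Hk1 : (0 < Rabs k)%R) by now apply Rabs_pos_lt.
  assert (Hud : (Cmod (u - tau) < d)%R).
  { rewrite Hu. apply (Rmult_lt_compat_r (Cmod h + 1)) in Hk; [| lra].
    replace (d / (Cmod h + 1) * (Cmod h + 1))%R with d in Hk by (field; lra). nra. }
  specialize (Hg u Hud). fold tau in Hg.
  assert (Key : (Re (c * g u) - Re (c * g tau) - Re (c * l * h) * k)%R
                = Re (c * (g u - g tau - l * (u - tau)))).
  { rewrite Eu. destruct c, l, h, (g u), (g tau). simpl. ring. }
  replace ((Re (c * g u) - Re (c * g tau)) / k - Re (c * l * h))%R
    with (Re (c * (g u - g tau - l * (u - tau))) / k)%R by (rewrite <- Key; field; lra).
  unfold Rdiv. rewrite Rabs_mult, Rabs_inv.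
  apply (Rle_lt_trans _ (Cmod c * (eps / (2 * M) * (Rabs k * Cmod h)) * / Rabs k)).
  { apply Rmult_le_compat_r; [apply Rlt_le, Rinv_0_lt_compat; lra |].
    eapply Rle_trans; [apply re_le_Cmod |]. rewrite Cmod_mult, <- Hu.
    apply Rmult_le_compat_l; [apply Cmod_ge_0 | exact Hg]. }
  replace (Cmod c * (eps / (2 * M) * (Rabs k * Cmod h)) * / Rabs k)%R
    with (eps / (2 * M) * (Cmod c * Cmod h))%R by (field; lra).
  apply (Rlt_le_trans _ (eps / (2 * M) * M)).
  - apply Rmult_lt_compat_l; [apply Rdiv_lt_0_compat |]; unfold M in *; lra.
  - replace (eps / (2 * M) * M)%R with (eps / 2)%R by (field; lra). lra.
Qed.

(* The real mean value theorem for s |-> Re (conj D * g (t0 + s h)), D = g (t0 + h) - g t0. *)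
Lemma Cmod_sq_mean_value (g E : C -> C) (t0 h : C) :
  (forall s : R, (0 <= s <= 1)%R -> Cderiv g (t0 + RtoC s * h) (E (t0 + RtoC s * h))) ->
  exists xi : R, (0 <= xi <= 1)%R /\
    Rmult (Cmod (g (t0 + h) - g t0)) (Cmod (g (t0 + h) - g t0))
    = Re (Cconj (g (t0 + h) - g t0) * E (t0 + RtoC xi * h) * h).
Proof.
  intros Hd. set (D := g (t0 + h) - g t0).
  destruct (MVT_cor2 (fun s => Re (Cconj D * g (t0 + RtoC s * h)))
                     (fun s => Re (Cconj D * E (t0 + RtoC s * h) * h)) 0 1 Rlt_0_1)
    as [xi [Hxi Hxi01]].
  { intros s Hs. apply derivable_pt_lim_Re_line, Hd, Hs. }
  exists xi. split; [lra |].
  replace (t0 + RtoC 1 * h)%C with (t0 + h) in Hxi by ring.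
  replace (t0 + RtoC 0 * h)%C with t0 in Hxi by ring.
  rewrite Rminus_0_r, Rmult_1_r in Hxi. rewrite <- Hxi.
  replace (Re (Cconj D * g (t0 + h)%C) - Re (Cconj D * g t0))%R with (Re (Cconj D * D))
    by (unfold D; destruct (Cconj D), (g (t0 + h)), (g t0); simpl; ring).
  rewrite Cmult_comm, <- Cmod2_conj. simpl. ring.
Qed.

Lemma Cderiv_mean_value_bound (g E : C -> C) (t0 : C) (d K : R) (n : nat) :
  (0 <= K)%R ->
  (forall tau, (Cmod (tau - t0) < d)%R ->
     Cderiv g tau (E tau) /\ (Cmod (E tau) <= K * Cmod (tau - t0) ^ n)%R) ->
  forall t, (Cmod (t - t0) < d)%R -> (Cmod (g t - g t0) <= K * Cmod (t - t0) ^ S n)%R.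
Proof.
  intros HK Hd t Ht. set (h := t - t0) in *. pose proof (Cmod_ge_0 h) as Hh.
  assert (Hline : forall s : R, (0 <= s <= 1)%R -> Cmod (t0 + RtoC s * h - t0) = (s * Cmod h)%R).
  { intros s Hs. replace (t0 + RtoC s * h - t0) with (RtoC s * h) by ring.
    now rewrite Cmod_mult, Cmod_R, Rabs_pos_eq by lra. }
  assert (Hin : forall s : R, (0 <= s <= 1)%R -> (Cmod (t0 + RtoC s * h - t0) < d)%R).
  { intros s Hs. rewrite (Hline s Hs). apply (Rle_lt_trans _ (Cmod h)); [nra | exact Ht]. }
  destruct (Cmod_sq_mean_value g E t0 h (fun s Hs => proj1 (Hd _ (Hin s Hs))))
    as [xi [Hxi HD2]].
  replace (t0 + h) with t in HD2 by (unfold h; ring). set (D := g t - g t0) in *.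
  set (xi_t := t0 + RtoC xi * h) in *.
  assert (HE : (Cmod (E xi_t) <= K * Cmod h ^ n)%R).
  { destruct (Hd _ (Hin xi Hxi)) as [_ HE]. rewrite (Hline xi Hxi) in HE.
    eapply Rle_trans; [exact HE |]. apply Rmult_le_compat_l; [exact HK |].
    apply pow_incr. split; [| rewrite <- (Rmult_1_l (Cmod h)) at 2]; nra. }
  assert (HDE : (Cmod D * Cmod D <= Cmod D * (K * Cmod h ^ n * Cmod h))%R).
  { rewrite HD2. apply (Rle_trans _ (Cmod (Cconj D * E xi_t * h))).
    { eapply Rle_trans; [apply Rle_abs | apply re_le_Cmod]. }
    rewrite !Cmod_mult, Cmod_conj, Rmult_assoc.
    apply Rmult_le_compat_l; [apply Cmod_ge_0 |].
    apply Rmult_le_compat_r; [exact Hh | exact HE]. }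
  simpl. rewrite (Rmult_comm (Cmod h)), <- Rmult_assoc. pose proof (Cmod_ge_0 D).
  destruct (Req_dec (Cmod D) 0) as [HD0 | HD0].
  - rewrite HD0. apply Rmult_le_pos; [apply Rmult_le_pos; [exact HK | apply pow_le] |]; lra.
  - apply (Rmult_le_reg_l (Cmod D)); lra.
Qed.

(** * Big-O at a point *)

Definition bigO (t0 : C) (f : C -> C) (n : nat) : Prop :=
  exists K : R, (0 <= K)%R /\ near t0 (fun t => (Cmod (f t) <= K * Cmod (t - t0) ^ n)%R).

Lemma bigO_near_ext (t0 : C) (f g : C -> C) (n : nat) :
  near t0 (fun t => f t = g t) -> bigO t0 f n -> bigO t0 g n.
Proof.
  intros E [K [HK Hf]]. exists K. split; [exact HK |].
  generalize (near_and _ _ _ E Hf). apply near_mono. intros t [<- H]. exact H.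
Qed.

Lemma bigO_ext (t0 : C) (f g : C -> C) (n : nat) :
  (forall t, f t = g t) -> bigO t0 f n -> bigO t0 g n.
Proof. intros E. apply bigO_near_ext. exists 1%R. split; [lra | auto]. Qed.

Lemma bigO_const (t0 c : C) : bigO t0 (fun _ => c) 0.
Proof.
  exists (Cmod c). split; [apply Cmod_ge_0 |]. exists 1%R. split; [lra |].
  intros t _. simpl. lra.
Qed.

Lemma bigO_add (t0 : C) (f g : C -> C) (n : nat) :
  bigO t0 f n -> bigO t0 g n -> bigO t0 (fun t => f t + g t) n.
Proof.
  intros [K1 [HK1 H1]] [K2 [HK2 H2]]. exists (K1 + K2)%R. split; [lra |].
  generalize (near_and _ _ _ H1 H2). apply near_mono. intros t [Hf Hg].
  eapply Rle_trans; [apply Cmod_triangle | lra].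
Qed.

Lemma bigO_opp (t0 : C) (f : C -> C) (n : nat) : bigO t0 f n -> bigO t0 (fun t => - f t) n.
Proof.
  intros [K [HK H]]. exists K. split; [exact HK |].
  revert H. apply near_mono. intros t. now rewrite Cmod_opp.
Qed.

Lemma bigO_sub (t0 : C) (f g : C -> C) (n : nat) :
  bigO t0 f n -> bigO t0 g n -> bigO t0 (fun t => f t - g t) n.
Proof. intros Hf Hg. apply bigO_add; [exact Hf | now apply bigO_opp]. Qed.

Lemma bigO_mul (t0 : C) (f g : C -> C) (n m : nat) :
  bigO t0 f n -> bigO t0 g m -> bigO t0 (fun t => f t * g t) (n + m).
Proof.
  intros [K1 [HK1 H1]] [K2 [HK2 H2]]. exists (K1 * K2)%R. split; [nra |].
  generalize (near_and _ _ _ H1 H2). apply near_mono. intros t [Hf Hg].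
  rewrite Cmod_mult, pow_add.
  replace (K1 * K2 * (Cmod (t - t0) ^ n * Cmod (t - t0) ^ m))%R
    with ((K1 * Cmod (t - t0) ^ n) * (K2 * Cmod (t - t0) ^ m))%R by ring.
  apply Rmult_le_compat; auto; apply Cmod_ge_0.
Qed.

Lemma bigO_mul_bounded (t0 : C) (f g : C -> C) (n : nat) :
  bigO t0 f n -> bigO t0 g 0 -> bigO t0 (fun t => f t * g t) n.
Proof. intros Hf Hg. rewrite <- (Nat.add_0_r n). exact (bigO_mul t0 f g n 0 Hf Hg). Qed.

Lemma bigO_le (t0 : C) (f : C -> C) (n m : nat) : (m <= n)%nat -> bigO t0 f n -> bigO t0 f m.
Proof.
  intros Hmn [K [HK H]]. exists K. split; [exact HK |].
  generalize (near_and _ _ _ H (near_disk t0 1 Rlt_0_1)). apply near_mono. intros t [Hf Ht].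
  eapply Rle_trans; [exact Hf |]. apply Rmult_le_compat_l; [exact HK |].
  set (x := Cmod (t - t0)) in *. pose proof (Cmod_ge_0 (t - t0)) as Hx. fold x in Hx.
  replace n with (m + (n - m))%nat by lia. rewrite pow_add.
  assert (x ^ (n - m) <= 1)%R by (rewrite <- (pow1 (n - m)); apply pow_incr; lra).
  assert (0 <= x ^ m)%R by (apply pow_le; lra). nra.
Qed.

Lemma bigO_Cderiv (t0 : C) (g : C -> C) (l : C) :
  Cderiv g t0 l -> bigO t0 (fun t => g t - g t0) 1.
Proof.
  intros H. exists (Cmod l + 1)%R. split; [pose proof (Cmod_ge_0 l); lra |].
  generalize (Cderiv_lipschitz g t0 l H). apply near_mono. intros t. now rewrite pow_1.
Qed.

Lemma bigO_bounded_of_Cderiv (t0 : C) (g : C -> C) (l : C) : Cderiv g t0 l -> bigO t0 g 0.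
Proof.
  intros H. apply (bigO_ext t0 (fun t => (g t - g t0) + g t0)); [intros; ring |].
  apply bigO_add; [| apply bigO_const]. exact (bigO_le t0 _ 1 0 (Nat.le_0_l 1) (bigO_Cderiv t0 g l H)).
Qed.

Lemma bigO_inv (t0 : C) (g : C -> C) (l : C) :
  Cderiv g t0 l -> g t0 <> 0 -> bigO t0 (fun t => / g t) 0.
Proof.
  intros H Hn. assert (Ha : (0 < Cmod (g t0))%R) by now apply Cmod_gt_0.
  exists (2 / Cmod (g t0))%R. split; [apply Rlt_le, Rdiv_lt_0_compat; lra |].
  generalize (Cderiv_near_nonzero g t0 l H Hn). apply near_mono. intros t Ht.
  simpl. rewrite Rmult_1_r, Cmod_inv by exact (Cmod_half_neq_0 _ _ Hn Ht).
  replace (2 / Cmod (g t0))%R with (/ (Cmod (g t0) / 2))%R by (field; lra).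
  apply Rinv_le_contravar; lra.
Qed.

Lemma bigO_integrate (t0 : C) (g E : C -> C) (n : nat) :
  g t0 = 0 -> near t0 (fun t => Cderiv g t (E t)) -> bigO t0 E n -> bigO t0 g (S n).
Proof.
  intros H0 Hg [K [HK HE]]. exists K. split; [exact HK |].
  destruct (near_and _ _ _ Hg HE) as [d [Hd H]]. exists d. split; [exact Hd |].
  intros t Ht. replace (g t) with (g t - g t0) by (rewrite H0; ring).
  exact (Cderiv_mean_value_bound g E t0 d K n HK H t Ht).
Qed.

Lemma bigO_1_of_Cderiv (t0 : C) (g : C -> C) (l : C) :
  g t0 = 0 -> Cderiv g t0 l -> bigO t0 g 1.
Proof.
  intros H0 H. apply (bigO_ext t0 (fun t => g t - g t0)); [intros t; rewrite H0; ring |].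
  exact (bigO_Cderiv t0 g l H).
Qed.

Lemma bigO_2_of_Cderiv (t0 : C) (g g' : C -> C) (l : C) :
  g t0 = 0 -> (forall t, Cderiv g t (g' t)) -> g' t0 = 0 -> Cderiv g' t0 l -> bigO t0 g 2.
Proof.
  intros H0 Hg H1 Hg'. apply (bigO_integrate t0 g g' 1 H0).
  - exists 1%R. split; [lra | auto].
  - exact (bigO_1_of_Cderiv t0 g' l H1 Hg').
Qed.

Lemma bigO_id (t0 : C) : bigO t0 (fun t => t) 0.
Proof. exact (bigO_bounded_of_Cderiv t0 _ _ (Cderiv_id t0)). Qed.

Lemma bigO_div_bounded (t0 : C) (f g : C -> C) (n : nat) :
  bigO t0 f n -> bigO t0 (fun t => / g t) 0 -> bigO t0 (fun t => f t / g t) n.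
Proof. exact (bigO_mul_bounded t0 f (fun t => / g t) n). Qed.

Lemma bigO_0_pair_le (t0 : C) (f g : C -> C) : bigO t0 f 0 -> bigO t0 g 0 ->
  exists M : R, (0 <= M)%R /\ near t0 (fun t => Cmod (f t) <= M /\ Cmod (g t) <= M)%R.
Proof.
  intros [K1 [HK1 H1]] [K2 [HK2 H2]]. exists (K1 + K2)%R. split; [lra |].
  generalize (near_and _ _ _ H1 H2). apply near_mono. simpl. intros t [Hf Hg]. lra.
Qed.

Lemma bigO_affine (t0 : C) (R e f A B : C -> C) (n : nat) :
  bigO t0 R n -> bigO t0 e n -> bigO t0 f n -> bigO t0 A 0 -> bigO t0 B 0 ->
  bigO t0 (fun t => R t + e t * A t + f t * B t) n.
Proof.
  intros HR He Hf HA HB.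
  apply bigO_add; [apply bigO_add |]; [exact HR | |]; now apply bigO_mul_bounded.
Qed.

(* [unfold] may leave eta-reduced bodies such as [Cplus 1]. *)
Ltac bounded := repeat match goal with
  | |- bigO _ (fun _ => ?c) 0 => apply bigO_const
  | |- bigO _ (fun t => t) 0 => apply bigO_id
  | |- bigO _ (Cplus ?a) 0 => apply (bigO_add _ (fun _ => a) (fun t => t))
  | |- bigO _ (Cminus ?a) 0 => apply (bigO_sub _ (fun _ => a) (fun t => t))
  | |- bigO _ (Cmult ?a) 0 => apply (bigO_mul_bounded _ (fun _ => a) (fun t => t))
  | |- bigO _ (fun _ => _ + _) _ => apply bigO_add
  | |- bigO _ (fun _ => _ - _) _ => apply bigO_sub
  | |- bigO _ (fun _ => - _) _ => apply bigO_opp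
  | |- bigO _ (fun _ => _ / _) _ => apply bigO_div_bounded
  | |- bigO _ (fun _ => _ * _) _ => apply bigO_mul_bounded
  | _ => assumption
  end.

(** * Local vanishing *)

Section LinearDerivativeBound.

Variables (u v U V : C -> C) (t0 : C) (d M : R).
Hypothesis HM : (0 <= M)%R.
Hypothesis Hderiv : forall t, (Cmod (t - t0) < d)%R ->
  Cderiv u t (U t) /\ Cderiv v t (V t) /\
  (Cmod (U t) <= M * (Cmod (u t) + Cmod (v t)))%R /\
  (Cmod (V t) <= M * (Cmod (u t) + Cmod (v t)))%R.
Hypotheses (Hu0 : u t0 = 0) (Hv0 : v t0 = 0).
Hypothesis Hbound : forall t, (Cmod (t - t0) < d)%R -> (Cmod (u t) <= 1 /\ Cmod (v t) <= 1)%R.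

Lemma linear_deriv_bound_pow (n : nat) (t : C) : (Cmod (t - t0) < d)%R ->
  (Cmod (u t) <= (2 * M) ^ n * Cmod (t - t0) ^ n)%R /\
  (Cmod (v t) <= (2 * M) ^ n * Cmod (t - t0) ^ n)%R.
Proof.
  revert t. induction n as [| n IH]; intros t Ht.
  - simpl. rewrite Rmult_1_r. exact (Hbound t Ht).
  - assert (HUV : forall tau, (Cmod (tau - t0) < d)%R ->
      (Cmod (U tau) <= (2 * M) ^ S n * Cmod (tau - t0) ^ n)%R /\
      (Cmod (V tau) <= (2 * M) ^ S n * Cmod (tau - t0) ^ n)%R).
    { intros tau Htau. destruct (Hderiv tau Htau) as [_ [_ [HU HV]]].
      destruct (IH tau Htau) as [Iu Iv].
      assert (M * (Cmod (u tau) + Cmod (v tau))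
              <= M * (2 * ((2 * M) ^ n * Cmod (tau - t0) ^ n)))%R
        by (apply Rmult_le_compat_l; lra).
      simpl. split; lra. }
    assert (HK : (0 <= (2 * M) ^ S n)%R) by (apply pow_le; lra).
    split.
    + replace (u t) with (u t - u t0) by (rewrite Hu0; ring).
      apply (Cderiv_mean_value_bound u U t0 d _ n HK); [| exact Ht].
      intros tau Htau. split; [apply (Hderiv tau Htau) | apply (HUV tau Htau)].
    + replace (v t) with (v t - v t0) by (rewrite Hv0; ring).
      apply (Cderiv_mean_value_bound v V t0 d _ n HK); [| exact Ht].
      intros tau Htau. split; [apply (Hderiv tau Htau) | apply (HUV tau Htau)].
Qed.

End LinearDerivativeBound.

Lemma linear_deriv_bound_vanish (u v U V : C -> C) (t0 : C) (M : R) :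
  (0 <= M)%R ->
  near t0 (fun t => Cderiv u t (U t) /\ Cderiv v t (V t) /\
    (Cmod (U t) <= M * (Cmod (u t) + Cmod (v t)))%R /\
    (Cmod (V t) <= M * (Cmod (u t) + Cmod (v t)))%R) ->
  u t0 = 0 -> v t0 = 0 -> near t0 (fun t => u t = 0 /\ v t = 0).
Proof.
  intros HM Hderiv Hu0 Hv0.
  destruct (near_center _ _ Hderiv) as [Du [Dv _]].
  assert (Hsmall : forall g l, Cderiv g t0 l -> g t0 = 0 -> near t0 (fun t => Cmod (g t) <= 1)%R).
  { intros g l Hg Hg0. apply (near_mono _ (fun t => Cmod (g t) < 1)%R); [intros; lra |].
    apply (Cderiv_continuous g t0 l (fun w => Cmod w < 1)%R Hg). rewrite Hg0.
    generalize (near_disk 0 1 Rlt_0_1). apply near_mono. intros w. now replace (w - 0) with w by ring. }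
  assert (Hq : (0 < / (2 * M + 1))%R) by (apply Rinv_0_lt_compat; lra).
  destruct (near_and _ _ _ (near_and _ _ _ Hderiv (near_disk t0 _ Hq))
              (near_and _ _ _ (Hsmall u _ Du Hu0) (Hsmall v _ Dv Hv0))) as [d [Hd H]].
  exists d. split; [exact Hd |]. intros t Ht.
  set (q := (2 * M * Cmod (t - t0))%R).
  assert (Hq1 : (0 <= q < 1)%R).
  { destruct (H t Ht) as [[_ Htq] _]. pose proof (Cmod_ge_0 (t - t0)). unfold q. split; [nra |].
    apply (Rmult_lt_compat_l (2 * M + 1)) in Htq; [| lra]. rewrite Rinv_r in Htq by lra. nra. }
  pose proof (fun n => linear_deriv_bound_pow u v U V t0 d M HM
                (fun t Ht => proj1 (proj1 (H t Ht))) Hu0 Hv0 (fun t Ht => proj2 (H t Ht)) n t Ht) as Hpow.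
  split; apply Cmod_eq_0, (le_geometric_eq_0 _ q); try apply Cmod_ge_0; try exact Hq1;
    intros n; unfold q; rewrite Rpow_mult_distr; apply (Hpow n).
Qed.

(** * The system (H) near a regular point *)

Definition H_field_y (a0 a2 a3 a4 t Y Z : C) : C := H_rhs_y a0 a2 a3 a4 t Y Z / (t * (t - 1)).
Definition H_field_z (a0 a1 a2 a3 a4 t Y Z : C) : C := H_rhs_z a0 a1 a2 a3 a4 t Y Z / (t * (t - 1)).

Definition solves_H_near (a0 a1 a2 a3 a4 : C) (y z : C -> C) (t0 : C) : Prop :=
  near t0 (fun t => exists dy dz : C,
    Cderiv y t dy /\ Cderiv z t dz /\
    t * (t - 1) * dy = H_rhs_y a0 a2 a3 a4 t (y t) (z t) /\
    t * (t - 1) * dz = H_rhs_z a0 a1 a2 a3 a4 t (y t) (z t)).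

Lemma solves_H_on_near (a0 a1 a2 a3 a4 : C) (y z : C -> C) (t0 : C) (r : R) :
  (0 < r)%R -> solves_H_on a0 a1 a2 a3 a4 y z t0 r -> solves_H_near a0 a1 a2 a3 a4 y z t0.
Proof. intros Hr H. exists r. now split. Qed.

Lemma near_regular (t0 : C) : t0 * (t0 - 1) <> 0 -> near t0 (fun t => t * (t - 1) <> 0).
Proof.
  intros H. assert (D : Cderiv (fun t => t * (t - 1)) t0 (2 * t0 - 1)).
  { eapply Cderiv_eq_deriv; [Cderiv_auto | cbv beta; ring]. }
  generalize (Cderiv_near_nonzero _ t0 _ D H). apply near_mono. intros t.
  exact (Cmod_half_neq_0 _ _ H).
Qed.

Lemma bigO_inv_regular (t0 : C) : t0 * (t0 - 1) <> 0 -> bigO t0 (fun t => / (t * (t - 1))) 0.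
Proof.
  intros H. refine (bigO_inv t0 (fun t => t * (t - 1)) (2 * t0 - 1) _ H).
  eapply Cderiv_eq_deriv; [Cderiv_auto | cbv beta; ring].
Qed.

Lemma solves_H_near_Cderiv (a0 a1 a2 a3 a4 : C) (y z : C -> C) (t0 : C) :
  t0 * (t0 - 1) <> 0 -> solves_H_near a0 a1 a2 a3 a4 y z t0 ->
  near t0 (fun t => Cderiv y t (H_field_y a0 a2 a3 a4 t (y t) (z t)) /\
                    Cderiv z t (H_field_z a0 a1 a2 a3 a4 t (y t) (z t))).
Proof.
  intros Hreg Hs. generalize (near_and _ _ _ Hs (near_regular t0 Hreg)). apply near_mono.
  intros t [[dy [dz [Dy [Dz [Ey Ez]]]]] Ht].
  unfold H_field_y, H_field_z. rewrite <- Ey, <- Ez. pose proof (regular_factors t Ht).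
  split; eapply Cderiv_eq_deriv; try eassumption; field; tauto.
Qed.

Definition slope_yy (a0 a3 a4 t y1 z1 y2 : C) : C :=
  2 * z1 * (y1 * y1 + y1 * y2 + y2 * y2 - (1 + t) * (y1 + y2) + t)
  - (a0 - 1) * (y1 + y2 - 1) - a3 * (y1 + y2 - t) - a4 * (y1 + y2 - 1 - t).
Definition slope_yz (t y2 : C) : C := 2 * y2 * (y2 - 1) * (y2 - t).
Definition slope_zy (a0 a3 a4 t y1 z1 y2 : C) : C :=
  - (3 * (y1 + y2) - 2 * (1 + t)) * z1 * z1 + 2 * (a0 - 1 + a3 + a4) * z1.
Definition slope_zz (a0 a3 a4 t y2 z1 z2 : C) : C :=
  - (y2 * (y2 - 1) + (y2 - 1) * (y2 - t) + y2 * (y2 - t)) * (z1 + z2)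
  + ((2 * y2 - 1) * (a0 - 1) + (2 * y2 - t) * a3 + (2 * y2 - t - 1) * a4).

Lemma H_field_y_sub (a0 a2 a3 a4 t y1 z1 y2 z2 : C) :
  H_field_y a0 a2 a3 a4 t y1 z1 - H_field_y a0 a2 a3 a4 t y2 z2
  = (y1 - y2) * (slope_yy a0 a3 a4 t y1 z1 y2 / (t * (t - 1)))
    + (z1 - z2) * (slope_yz t y2 / (t * (t - 1))).
Proof. unfold H_field_y, H_rhs_y, slope_yy, slope_yz, Cdiv. ring. Qed.

Lemma H_field_z_sub (a0 a1 a2 a3 a4 t y1 z1 y2 z2 : C) :
  H_field_z a0 a1 a2 a3 a4 t y1 z1 - H_field_z a0 a1 a2 a3 a4 t y2 z2
  = (y1 - y2) * (slope_zy a0 a3 a4 t y1 z1 y2 / (t * (t - 1)))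
    + (z1 - z2) * (slope_zz a0 a3 a4 t y2 z1 z2 / (t * (t - 1))).
Proof. unfold H_field_z, H_rhs_z, slope_zy, slope_zz, Cdiv. ring. Qed.

Lemma solves_H_near_unique (a0 a1 a2 a3 a4 : C) (y1 z1 y2 z2 : C -> C) (t0 : C) :
  t0 * (t0 - 1) <> 0 ->
  solves_H_near a0 a1 a2 a3 a4 y1 z1 t0 -> solves_H_near a0 a1 a2 a3 a4 y2 z2 t0 ->
  y1 t0 = y2 t0 -> z1 t0 = z2 t0 -> near t0 (fun t => y1 t = y2 t /\ z1 t = z2 t).
Proof.
  intros Hreg S1 S2 Ey Ez.
  pose proof (solves_H_near_Cderiv _ _ _ _ _ _ _ _ Hreg S1) as D1.
  pose proof (solves_H_near_Cderiv _ _ _ _ _ _ _ _ Hreg S2) as D2.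
  destruct (near_center _ _ D1) as [Dy1 Dz1]. destruct (near_center _ _ D2) as [Dy2 Dz2].
  pose proof (bigO_bounded_of_Cderiv _ _ _ Dy1). pose proof (bigO_bounded_of_Cderiv _ _ _ Dz1).
  pose proof (bigO_bounded_of_Cderiv _ _ _ Dy2). pose proof (bigO_bounded_of_Cderiv _ _ _ Dz2).
  pose proof (bigO_inv_regular t0 Hreg).
  assert (Byy : bigO t0 (fun t => slope_yy a0 a3 a4 t (y1 t) (z1 t) (y2 t) / (t * (t - 1))) 0)
    by (unfold slope_yy; bounded).
  assert (Byz : bigO t0 (fun t => slope_yz t (y2 t) / (t * (t - 1))) 0)
    by (unfold slope_yz; bounded).
  assert (Bzy : bigO t0 (fun t => slope_zy a0 a3 a4 t (y1 t) (z1 t) (y2 t) / (t * (t - 1))) 0)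
    by (unfold slope_zy; bounded).
  assert (Bzz : bigO t0 (fun t => slope_zz a0 a3 a4 t (y2 t) (z1 t) (z2 t) / (t * (t - 1))) 0)
    by (unfold slope_zz; bounded).
  destruct (bigO_0_pair_le _ _ _ Byy Byz) as [M1 [HM1 N1]].
  destruct (bigO_0_pair_le _ _ _ Bzy Bzz) as [M2 [HM2 N2]].
  assert (Hdiff : near t0 (fun t => y1 t - y2 t = 0 /\ z1 t - z2 t = 0)).
  { apply (linear_deriv_bound_vanish _ _
      (fun t => H_field_y a0 a2 a3 a4 t (y1 t) (z1 t) - H_field_y a0 a2 a3 a4 t (y2 t) (z2 t))
      (fun t => H_field_z a0 a1 a2 a3 a4 t (y1 t) (z1 t) - H_field_z a0 a1 a2 a3 a4 t (y2 t) (z2 t))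
      t0 (M1 + M2)); [lra | | rewrite Ey; ring | rewrite Ez; ring].
    generalize (near_and _ _ _ (near_and _ _ _ D1 D2) (near_and _ _ _ N1 N2)). apply near_mono.
    intros t [[[Dy1' Dz1'] [Dy2' Dz2']] [[Hyy Hyz] [Hzy Hzz]]].
    split; [now apply Cderiv_minus | split; [now apply Cderiv_minus |]].
    rewrite H_field_y_sub, H_field_z_sub. split; apply Cmod_lin_comb_le; lra. }
  revert Hdiff. apply near_mono. intros t [Hy Hz]. split; now apply Csub_eq_0.
Qed.

Lemma H_field_y_residual (a0 a2 a3 a4 t Y Z P Q dP : C) : t * (t - 1) <> 0 ->
  H_field_y a0 a2 a3 a4 t Y Z - dP
  = (H_rhs_y a0 a2 a3 a4 t P Q - t * (t - 1) * dP) / (t * (t - 1))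
    + (Y - P) * (slope_yy a0 a3 a4 t Y Z P / (t * (t - 1)))
    + (Z - Q) * (slope_yz t P / (t * (t - 1))).
Proof.
  intros Ht. rewrite <- Cplus_assoc, <- (H_field_y_sub a0 a2 a3 a4 t Y Z P Q).
  pose proof (regular_factors t Ht). unfold H_field_y. field. tauto.
Qed.

Lemma H_field_z_residual (a0 a1 a2 a3 a4 t Y Z P Q dQ : C) : t * (t - 1) <> 0 ->
  H_field_z a0 a1 a2 a3 a4 t Y Z - dQ
  = (H_rhs_z a0 a1 a2 a3 a4 t P Q - t * (t - 1) * dQ) / (t * (t - 1))
    + (Y - P) * (slope_zy a0 a3 a4 t Y Z P / (t * (t - 1)))
    + (Z - Q) * (slope_zz a0 a3 a4 t P Z Q / (t * (t - 1))).
Proof.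
  intros Ht. rewrite <- Cplus_assoc, <- (H_field_z_sub a0 a1 a2 a3 a4 t Y Z P Q).
  pose proof (regular_factors t Ht). unfold H_field_z. field. tauto.
Qed.

Lemma solves_H_near_error_Cderiv (a0 a1 a2 a3 a4 : C) (y z P Q dP dQ : C -> C) (t0 : C) :
  t0 * (t0 - 1) <> 0 -> solves_H_near a0 a1 a2 a3 a4 y z t0 ->
  (forall t, Cderiv P t (dP t)) -> (forall t, Cderiv Q t (dQ t)) ->
  near t0 (fun t =>
    Cderiv (fun s => y s - P s) t
      ((H_rhs_y a0 a2 a3 a4 t (P t) (Q t) - t * (t - 1) * dP t) / (t * (t - 1))
       + (y t - P t) * (slope_yy a0 a3 a4 t (y t) (z t) (P t) / (t * (t - 1)))
       + (z t - Q t) * (slope_yz t (P t) / (t * (t - 1)))) /\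
    Cderiv (fun s => z s - Q s) t
      ((H_rhs_z a0 a1 a2 a3 a4 t (P t) (Q t) - t * (t - 1) * dQ t) / (t * (t - 1))
       + (y t - P t) * (slope_zy a0 a3 a4 t (y t) (z t) (P t) / (t * (t - 1)))
       + (z t - Q t) * (slope_zz a0 a3 a4 t (P t) (z t) (Q t) / (t * (t - 1))))).
Proof.
  intros Hreg Hs DP DQ.
  generalize (near_and _ _ _ (solves_H_near_Cderiv _ _ _ _ _ _ _ _ Hreg Hs) (near_regular t0 Hreg)).
  apply near_mono. intros t [[Dy Dz] Ht]. split.
  - eapply Cderiv_eq_deriv; [exact (Cderiv_minus _ _ _ _ _ Dy (DP t)) |].
    exact (H_field_y_residual _ _ _ _ _ _ _ _ _ _ Ht).
  - eapply Cderiv_eq_deriv; [exact (Cderiv_minus _ _ _ _ _ Dz (DQ t)) |].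
    exact (H_field_z_residual _ _ _ _ _ _ _ _ _ _ _ Ht).
Qed.

Lemma solves_H_near_approx (a0 a1 a2 a3 a4 : C) (y z P Q dP dQ : C -> C) (t0 : C) :
  t0 * (t0 - 1) <> 0 -> solves_H_near a0 a1 a2 a3 a4 y z t0 ->
  y t0 = P t0 -> z t0 = Q t0 ->
  (forall t, Cderiv P t (dP t)) -> (forall t, Cderiv Q t (dQ t)) ->
  bigO t0 (fun t => H_rhs_y a0 a2 a3 a4 t (P t) (Q t) - t * (t - 1) * dP t) 2 ->
  bigO t0 (fun t => H_rhs_z a0 a1 a2 a3 a4 t (P t) (Q t) - t * (t - 1) * dQ t) 1 ->
  bigO t0 (fun t => y t - P t) 3 /\ bigO t0 (fun t => z t - Q t) 2.
Proof.
  intros Hreg Hs Hy0 Hz0 DP DQ BRy BRz.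
  pose proof (solves_H_near_error_Cderiv _ _ _ _ _ _ _ _ _ _ _ _ Hreg Hs DP DQ) as De.
  destruct (near_center _ _ (solves_H_near_Cderiv _ _ _ _ _ _ _ _ Hreg Hs)) as [Dy0 Dz0].
  pose proof (bigO_bounded_of_Cderiv _ _ _ Dy0). pose proof (bigO_bounded_of_Cderiv _ _ _ Dz0).
  pose proof (bigO_bounded_of_Cderiv _ _ _ (DP t0)).
  pose proof (bigO_bounded_of_Cderiv _ _ _ (DQ t0)).
  pose proof (bigO_inv_regular t0 Hreg).
  set (e := fun t => y t - P t) in De |- *. set (f := fun t => z t - Q t) in De |- *.
  assert (He0 : e t0 = 0) by (unfold e; rewrite Hy0; ring).
  assert (Hf0 : f t0 = 0) by (unfold f; rewrite Hz0; ring).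
  assert (step_e : forall n, bigO t0 (fun t => H_rhs_y a0 a2 a3 a4 t (P t) (Q t) - t * (t - 1) * dP t) n ->
            bigO t0 e n -> bigO t0 f n -> bigO t0 e (S n)).
  { intros n HR He Hf. apply (bigO_integrate _ _ _ n He0 (near_mono _ _ _ (fun t => @proj1 _ _) De)).
    apply bigO_affine; try assumption; [apply bigO_div_bounded; assumption | |];
      [unfold slope_yy | unfold slope_yz]; bounded. }
  assert (step_f : forall n, bigO t0 (fun t => H_rhs_z a0 a1 a2 a3 a4 t (P t) (Q t) - t * (t - 1) * dQ t) n ->
            bigO t0 e n -> bigO t0 f n -> bigO t0 f (S n)).
  { intros n HR He Hf. apply (bigO_integrate _ _ _ n Hf0 (near_mono _ _ _ (fun t => @proj2 _ _) De)).
    apply bigO_affine; try assumption; [apply bigO_div_bounded; assumption | |];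
      [unfold slope_zy | unfold slope_zz]; bounded. }
  assert (He1 : bigO t0 e 1) by (apply step_e; [apply (bigO_le _ _ 2) | unfold e | unfold f]; auto; bounded).
  assert (Hf1 : bigO t0 f 1) by (apply step_f; [apply (bigO_le _ _ 1) | unfold e | unfold f]; auto; bounded).
  assert (He2 : bigO t0 e 2) by (apply step_e; [apply (bigO_le _ _ 2) | |]; auto).
  assert (Hf2 : bigO t0 f 2) by (apply step_f; auto).
  split; [apply step_e |]; assumption.
Qed.

(** * The transformation sigma_2 o sigma_1 *)

Lemma Cderiv_one_minus_inv (t : C) : t <> 0 -> Cderiv (fun s => 1 - / s) t (/ (t * t)).
Proof.
  intros Ht. eapply Cderiv_eq_deriv.
  - exact (Cderiv_minus _ _ t _ _ (Cderiv_const 1 t) (Cderiv_inv _ t _ (Cderiv_id t) Ht)).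
  - cbv beta. field. exact Ht.
Qed.

Section Sigma.

Variables a2 a3 : C.

Local Notation a0 := (1 - 2 * a2 - 3 * a3).

Lemma H_rhs_y_sigma (t Y Z dy : C) :
  t <> 0 -> t - 1 <> 0 -> 1 - Y <> 0 ->
  (1 - / t) * (1 - / t - 1) * dy = H_rhs_y a0 a2 a3 a3 (1 - / t) Y Z ->
  t * (t - 1) * (dy / (t * t) / ((1 - Y) * (1 - Y)))
  = H_rhs_y a0 a2 a3 a3 t (/ (1 - Y)) (Z * (1 - Y) * (1 - Y) - a2 * (1 - Y)).
Proof.
  intros H0 H1 HY E. pose proof (Cminus_1_minus_neq_0 t).
  replace dy with (H_rhs_y a0 a2 a3 a3 (1 - / t) Y Z / ((1 - / t) * (1 - / t - 1)))
    by (rewrite <- E; field; tauto).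
  unfold H_rhs_y. field. tauto.
Qed.

Lemma H_rhs_z_sigma (t Y Z dy dz : C) :
  t <> 0 -> t - 1 <> 0 -> 1 - Y <> 0 ->
  (1 - / t) * (1 - / t - 1) * dy = H_rhs_y a0 a2 a3 a3 (1 - / t) Y Z ->
  (1 - / t) * (1 - / t - 1) * dz = H_rhs_z a0 a3 a2 a3 a3 (1 - / t) Y Z ->
  t * (t - 1) * ((dz * (1 - Y) * (1 - Y) - (2 * Z * (1 - Y) - a2) * dy) / (t * t))
  = H_rhs_z a0 a3 a2 a3 a3 t (/ (1 - Y)) (Z * (1 - Y) * (1 - Y) - a2 * (1 - Y)).
Proof.
  intros H0 H1 HY Ey Ez. pose proof (Cminus_1_minus_neq_0 t).
  replace dy with (H_rhs_y a0 a2 a3 a3 (1 - / t) Y Z / ((1 - / t) * (1 - / t - 1)))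
    by (rewrite <- Ey; field; tauto).
  replace dz with (H_rhs_z a0 a3 a2 a3 a3 (1 - / t) Y Z / ((1 - / t) * (1 - / t - 1)))
    by (rewrite <- Ez; field; tauto).
  unfold H_rhs_y, H_rhs_z. field. tauto.
Qed.

(* The image of (y, z) under sigma_2 o sigma_1, as a function of the new variable
   t = 1 / (1 - s), i.e. evaluated at s = 1 - 1 / t. *)
Definition sigma_y (y : C -> C) (t : C) : C := / (1 - y (1 - / t)).
Definition sigma_z (y z : C -> C) (t : C) : C :=
  z (1 - / t) * (1 - y (1 - / t)) * (1 - y (1 - / t)) - a2 * (1 - y (1 - / t)).

Lemma solves_H_near_sigma (y z : C -> C) (t0 : C) :
  t0 * (t0 - 1) <> 0 -> 1 - y (1 - / t0) <> 0 ->
  solves_H_near a0 a3 a2 a3 a3 y z (1 - / t0) ->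
  solves_H_near a0 a3 a2 a3 a3 (sigma_y y) (sigma_z y z) t0.
Proof.
  intros Hreg Hg0 Hs. destruct (regular_factors t0 Hreg) as [Ht0 _].
  destruct (near_center _ _ Hs) as [dy0 [dz0 [Dy0 _]]].
  assert (Dg0 : Cderiv (fun t => 1 - y (1 - / t)) t0 (0 - / (t0 * t0) * dy0)).
  { exact (Cderiv_minus _ _ _ _ _ (Cderiv_const 1 t0)
             (Cderiv_comp y (fun s => 1 - / s) _ _ _ Dy0 (Cderiv_one_minus_inv t0 Ht0))). }
  generalize (near_and _ _ _ (near_and _ _ _ (near_regular t0 Hreg)
                (Cderiv_near_nonzero _ _ _ Dg0 Hg0))
                (Cderiv_continuous _ t0 _ _ (Cderiv_one_minus_inv t0 Ht0) Hs)).
  apply near_mono. intros t [[Ht Hgt] [dy [dz [Dy [Dz [Ey Ez]]]]]].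
  apply Cmod_half_neq_0 in Hgt; [| exact Hg0]. destruct (regular_factors t Ht) as [Ht1 Ht2].
  pose proof (Cderiv_comp y (fun s => 1 - / s) _ _ _ Dy (Cderiv_one_minus_inv t Ht1)) as Dys.
  pose proof (Cderiv_comp z (fun s => 1 - / s) _ _ _ Dz (Cderiv_one_minus_inv t Ht1)) as Dzs.
  pose proof (Cderiv_minus _ _ _ _ _ (Cderiv_const 1 t) Dys) as Dg.
  exists (dy / (t * t) / ((1 - y (1 - / t)) * (1 - y (1 - / t)))),
    ((dz * (1 - y (1 - / t)) * (1 - y (1 - / t))
      - (2 * z (1 - / t) * (1 - y (1 - / t)) - a2) * dy) / (t * t)).
  split; [| split; [| split]].
  - eapply Cderiv_eq_deriv; [exact (Cderiv_inv _ t _ Dg Hgt) | cbv beta; field; tauto].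
  - unfold sigma_z. eapply Cderiv_eq_deriv; [Cderiv_auto | cbv beta; field; exact Ht1].
  - exact (H_rhs_y_sigma _ _ _ _ Ht1 Ht2 Hgt Ey).
  - exact (H_rhs_z_sigma _ _ _ _ _ Ht1 Ht2 Hgt Ey Ez).
Qed.

End Sigma.

(** * The point t = -w^2 *)

Section CubeRootPoint.

Variables w a2 a3 : C.
Hypothesis Hw : w * w = -1 - w.

Local Notation a0 := (1 - 2 * a2 - 3 * a3).
Local Notation t0 := (- (w * w)).

Lemma cube_root_point_regular : t0 * (t0 - 1) <> 0.
Proof. replace (t0 * (t0 - 1)) with (- (1) : C) by ring [Hw]. exact Copp_1_neq_0. Qed.

Lemma cube_root_point_one_minus_neq_0 : 1 - t0 <> 0.
Proof.
  destruct (regular_factors t0 cube_root_point_regular) as [_ H1]. intros E. apply H1.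
  replace (t0 - 1) with (- (1 - t0)) by ring. rewrite E. ring.
Qed.

Lemma cube_root_point_inv_one_minus : / (1 - t0) = t0.
Proof. field [Hw]. exact cube_root_point_one_minus_neq_0. Qed.

Lemma cube_root_point_one_minus_inv : 1 - / t0 = t0.
Proof.
  field [Hw]. intros E. apply (proj1 (regular_factors t0 cube_root_point_regular)).
  rewrite E. ring.
Qed.

Definition approx_y (t : C) : C :=
  - (w * w) + (1 - a0) * (t + w * w)
  + (1 + 2 * w) / 3 * a0 * (1 - a0) * ((t + w * w) * (t + w * w)).
Definition approx_z (t : C) : C := (2 * w + 1) / 3 * a2 - a2 / 3 * (1 - a0) * (t + w * w).
Definition approx_y' (t : C) : C := (1 - a0) + (1 + 2 * w) / 3 * a0 * (1 - a0) * (2 * (t + w * w)).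
Definition approx_z' : C := - (a2 / 3 * (1 - a0)).

Lemma approx_y_Cderiv (t : C) : Cderiv approx_y t (approx_y' t).
Proof. unfold approx_y. eapply Cderiv_eq_deriv; [Cderiv_auto | unfold approx_y'; cbv beta; ring]. Qed.

Lemma approx_z_Cderiv (t : C) : Cderiv approx_z t approx_z'.
Proof. unfold approx_z. eapply Cderiv_eq_deriv; [Cderiv_auto | unfold approx_z'; cbv beta; ring]. Qed.

Lemma approx_y_residual :
  bigO t0 (fun t => H_rhs_y a0 a2 a3 a3 t (approx_y t) (approx_z t) - t * (t - 1) * approx_y' t) 2.
Proof.
  unfold H_rhs_y, approx_y, approx_z, approx_y'.
  eapply bigO_2_of_Cderiv;
    [ field [Hw]
    | intros t; eapply Cderiv_eq_deriv; [Cderiv_auto | reflexivity]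
    | cbv beta; field [Hw]
    | Cderiv_auto ].
Qed.

Lemma approx_z_residual :
  bigO t0 (fun t => H_rhs_z a0 a3 a2 a3 a3 t (approx_y t) (approx_z t) - t * (t - 1) * approx_z') 1.
Proof.
  unfold H_rhs_z, approx_y, approx_z, approx_z'.
  eapply bigO_1_of_Cderiv; [field [Hw] | Cderiv_auto].
Qed.

Lemma cube_root_point_taylor (y z : C -> C) :
  solves_H_near a0 a3 a2 a3 a3 y z t0 -> y t0 = t0 -> z t0 = (2 * w + 1) / 3 * a2 ->
  bigO t0 (fun t => y t - approx_y t) 3 /\ bigO t0 (fun t => z t - approx_z t) 2.
Proof.
  intros Hs Hy0 Hz0.
  apply (solves_H_near_approx a0 a3 a2 a3 a3 y z approx_y approx_z approx_y' (fun _ => approx_z'));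
    try assumption.
  - exact cube_root_point_regular.
  - rewrite Hy0. unfold approx_y. ring.
  - rewrite Hz0. unfold approx_z. ring.
  - exact approx_y_Cderiv.
  - exact approx_z_Cderiv.
  - exact approx_y_residual.
  - exact approx_z_residual.
Qed.

Lemma cube_root_point_sigma_invariant (y z : C -> C) :
  solves_H_near a0 a3 a2 a3 a3 y z t0 -> y t0 = t0 -> z t0 = (2 * w + 1) / 3 * a2 ->
  near t0 (fun t => y t = sigma_y y t /\ z t = sigma_z a2 y z t).
Proof.
  intros Hs Hy0 Hz0. pose proof cube_root_point_regular as Hreg.
  pose proof cube_root_point_one_minus_neq_0 as H1t0.
  apply (solves_H_near_unique _ _ _ _ _ _ _ _ _ t0 Hreg Hs).
  - apply solves_H_near_sigma; rewrite ?cube_root_point_one_minus_inv, ?Hy0; assumption.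
  - unfold sigma_y. rewrite cube_root_point_one_minus_inv, Hy0, cube_root_point_inv_one_minus.
    reflexivity.
  - unfold sigma_z. rewrite cube_root_point_one_minus_inv, Hy0, Hz0. field [Hw].
Qed.

Lemma cube_root_point_invariance (y z : C -> C) :
  solves_H_near a0 a3 a2 a3 a3 y z t0 -> y t0 = t0 -> z t0 = (2 * w + 1) / 3 * a2 ->
  near t0 (fun t => y (1 / (1 - t)) = 1 / (1 - y t) /\
                    z (1 / (1 - t)) = - (1 - y t) * (- z t * (1 - y t) + a2)).
Proof.
  intros Hs Hy0 Hz0. pose proof cube_root_point_one_minus_neq_0 as H1t0.
  assert (D1 : Cderiv (fun t => 1 - t) t0 (0 - 1))
    by exact (Cderiv_minus _ _ t0 _ _ (Cderiv_const 1 t0) (Cderiv_id t0)).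
  pose proof (Cderiv_inv _ t0 _ D1 H1t0) as DT.
  pose proof (cube_root_point_sigma_invariant y z Hs Hy0 Hz0) as Hinv.
  replace t0 with (/ (1 - t0)) in Hinv at 1 by exact cube_root_point_inv_one_minus.
  generalize (near_and _ _ _ (Cderiv_continuous _ t0 _ _ DT Hinv)
                (Cderiv_near_nonzero _ t0 _ D1 H1t0)).
  apply near_mono. intros t [[Ey Ez] Ht]. apply (Cmod_half_neq_0 _ _ H1t0) in Ht.
  unfold sigma_y, sigma_z in Ey, Ez.
  replace (1 - / / (1 - t)) with t in Ey, Ez by (field; exact Ht).
  replace (1 / (1 - t)) with (/ (1 - t)) by (field; exact Ht).
  rewrite Ey, Ez. split; [unfold Cdiv |]; ring.
Qed.

End CubeRootPoint.

Lemma cube_root_of_unity_eq (w : C) : w * w * w = 1 -> w <> 1 -> w * w = -1 - w.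
Proof.
  intros H3 H1. assert (Hm : w - 1 <> 0) by (intros E; apply H1, Csub_eq_0, E).
  assert (Hq : (w - 1) * (w * w + w + 1) = 0).
  { replace ((w - 1) * (w * w + w + 1)) with (w * w * w - 1) by ring. rewrite H3. ring. }
  destruct (Ceq_dec (w * w + w + 1) 0) as [Hq0 | Hq0]; [| now destruct (Cmult_neq_0 _ _ Hm Hq0)].
  replace (w * w) with ((w * w + w + 1) - w - 1) by ring. rewrite Hq0. ring.
Qed.

Lemma near_opp_disk (c : C) (P : C -> Prop) :
  near (- c) P -> exists d : R, (0 < d)%R /\ forall t, (Cmod (t + c) < d)%R -> P t.
Proof.
  intros [d [Hd H]]. exists d. split; [exact Hd |]. intros t Ht. apply H.
  now replace (t - - c) with (t + c) by ring.
Qed.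

Lemma bigO_opp_disk (c : C) (f : C -> C) (n : nat) : bigO (- c) f n ->
  exists K d : R, (0 < d)%R /\ forall t, (Cmod (t + c) < d)%R -> (Cmod (f t) <= K * Cmod (t + c) ^ n)%R.
Proof.
  intros [K [_ H]]. destruct (near_opp_disk c _ H) as [d [Hd Hf]]. exists K, d. split; [exact Hd |].
  intros t Ht. replace (t + c) with (t - - c) by ring. exact (Hf t Ht).
Qed.

Theorem proposition3 (w a0 a1 a2 a3 a4 : C) (y z : C -> C) (r : R) :
  w * w * w = 1 -> w <> 1 ->
  a0 + a1 + 2 * a2 + a3 + a4 = 1 ->
  a1 = a3 -> a3 = a4 ->
  (0 < r)%R ->
  solves_H_on a0 a1 a2 a3 a4 y z (- (w * w)) r ->
  y (- (w * w)) = - (w * w) ->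
  z (- (w * w)) = (2 * w + 1) / 3 * a2 ->
  (exists (K d : R), (0 < d)%R /\
     forall t : C, (Cmod (t + w * w) < d)%R ->
       (Cmod (y t - (- (w * w) + (1 - a0) * (t + w * w)
                     + (1 + 2 * w) / 3 * a0 * (1 - a0) * ((t + w * w) * (t + w * w))))
          <= K * Cmod (t + w * w) ^ 3)%R) /\
  (exists (K d : R), (0 < d)%R /\
     forall t : C, (Cmod (t + w * w) < d)%R ->
       (Cmod (z t - ((2 * w + 1) / 3 * a2 - a2 / 3 * (1 - a0) * (t + w * w)))
          <= K * Cmod (t + w * w) ^ 2)%R) /\
  (exists d : R, (0 < d)%R /\
     forall t : C, (Cmod (t + w * w) < d)%R ->
       y (1 / (1 - t)) = 1 / (1 - y t) /\
       z (1 / (1 - t)) = - (1 - y t) * (- z t * (1 - y t) + a2)).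
Proof.
  intros Hw3 Hw1 Hsum <- <- Hr Hs Hy0 Hz0.
  pose proof (cube_root_of_unity_eq w Hw3 Hw1) as Hw.
  replace a0 with (1 - 2 * a2 - 3 * a1) in * by (rewrite <- Hsum; ring).
  apply solves_H_on_near in Hs; [| exact Hr].
  destruct (cube_root_point_taylor w a2 a1 Hw y z Hs Hy0 Hz0) as [Ty Tz].
  split; [| split].
  - exact (bigO_opp_disk _ _ _ Ty).
  - exact (bigO_opp_disk _ _ _ Tz).
  - exact (near_opp_disk _ _ (cube_root_point_invariance w a2 a1 Hw y z Hs Hy0 Hz0)).
Qed.
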